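(* Let $n$ be a positive integer and let $c\geq 2$ be an integer whose smallest prime factor $p_1$ satisfies $p_1>(n+1)^2/4$. Then there is no arithmetical structure $(r_1,\dots,r_n)$ on $K_n$ with $r_1=c$.
   Context: An arithmetical structure on the complete graph $K_n$ is an $n$-tuple $(r_1,r_2,\dots,r_n)$ of positive integers with $\gcd(r_1,\dots,r_n)=1$ such that $r_j$ divides $\sum_{i=1}^n r_i$ for every $j$. The entries are always listed so that $r_1\geq r_2\geq\dots\geq r_n$; thus $r_1$ is the largest value of the structure. *)

From mathcomp Require Import all_boot.
Set Implicit Arguments. Unset Strict Implicit. Unset Printing Implicit Defensive.

Definition arith_structure_Kn (n : nat) (r : seq nat) : Prop :=
  [/\ size r = n,
      all (fun x => 0 < x) r,
      sorted geq r,
      foldr gcdn 0 r = 1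
    & all (fun x => x %| sumn r) r].

From mathcomp Require Import all_boot.
From mathcomp Require Import zify.

(* Let r = (c, r_2, ..., r_n) be an arithmetical structure on
   K_n with largest entry c, and write sumn r = k * c.  An entry x < c
   divides k * c but is not a multiple of c; if k * c = d * x with
   d < pdiv c then d would be coprime to c and c would divide x, so
   d >= pdiv c, i.e. pdiv c * x <= k * c.  Split r into the q entries equal
   to c and the m entries smaller than c (m >= 1, since otherwise c would
   divide the gcd 1).  The small entries sum to t * c with t = k - q >= 1,
   so pdiv c * t <= m * (t + q).  On the other hand AM-GM gives
   4 * m * (t + q) <= (m + q + 1)^2 * t = (n + 1)^2 * t < 4 * pdiv c * t,
   a contradiction. *)

Lemma coprime_lt_pdiv (c d : nat) : 0 < d < pdiv c -> coprime c d.
Proof.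
case/andP=> d_gt0 d_lt; rewrite /coprime; apply/eqP.
have g_gt0 : 0 < gcdn c d by rewrite gcdn_gt0 d_gt0 orbT.
case: (ltnP 1 (gcdn c d)) => g_gt1; last by lia.
have := pdiv_min_dvd g_gt1 (dvdn_gcdl c d).
have := dvdn_leq d_gt0 (dvdn_gcdr c d).
lia.
Qed.

(* A divisor x of a positive multiple a of c that is not itself a multiple
   of c has cofactor at least pdiv c, hence pdiv c * x <= a. *)
Lemma pdiv_mul_le (c a x : nat) :
  0 < a -> c %| a -> x %| a -> ~~ (c %| x) -> pdiv c * x <= a.
Proof.
move=> a_gt0 c_dvd /dvdnP [d def_a] c_ndvd_x.
have d_gt0 : 0 < d by move: a_gt0; rewrite def_a muln_gt0 => /andP [].
case: (ltnP d (pdiv c)) => d_lt; last by rewrite def_a leq_mul2r d_lt orbT.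
have cop : coprime c d by apply: coprime_lt_pdiv; rewrite d_gt0.
by move: c_dvd; rewrite def_a Gauss_dvdr // (negbTE c_ndvd_x).
Qed.

Lemma sorted_geq_le_head {s : seq nat} :
  sorted geq s -> all (fun y => y <= head 0 s) s.
Proof.
case: s => [|x s] //= srt; rewrite leqnn /=.
by apply: (order_path_min _ srt) => a b e ba eb; apply: leq_trans eb ba.
Qed.

Lemma dvdn_foldr_gcd (d : nat) (s : seq nat) :
  (d %| foldr gcdn 0 s) = all (dvdn d) s.
Proof. by elim: s => [|x s IH] /=; rewrite ?dvdn0 // dvdn_gcd IH. Qed.

Lemma sumn_split (c : nat) (s : seq nat) :
  sumn s = count_mem c s * c + sumn [seq x <- s | x != c].
Proof.
elim: s => [|x s IH] //=; case: (eqVneq x c) => [->|_] /=; rewrite IH.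
  by rewrite mulnDl mul1n addnA.
by rewrite add0n addnCA.
Qed.

Lemma sumn_bound (p b : nat) (s : seq nat) :
  all (fun x => p * x <= b) s -> p * sumn s <= size s * b.
Proof.
elim: s => [|x s IH] /=; first by rewrite muln0.
move=> /andP [hx /IH hs].
by rewrite mulnDr mulSn leq_add.
Qed.

Lemma sumn_gt0 (s : seq nat) :
  all (fun x => 0 < x) s -> (0 < sumn s) = (0 < size s).
Proof. by case: s => [|x s] //= /andP [x_gt0 _]; rewrite ltn_addr. Qed.

Lemma head_in {x : nat} {s : seq nat} : x \in s -> head 0 s \in s.
Proof. by case: s => //= y s _; rewrite mem_head. Qed.

Lemma gcd1_has_other {c : nat} {s : seq nat} :
  1 < c -> foldr gcdn 0 s = 1 -> has (fun x => x != c) s.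
Proof.
move=> c_gt1 gcd_s; apply: contraT; rewrite has_predC negbK => all_c.
have : c %| foldr gcdn 0 s.
  by rewrite dvdn_foldr_gcd; apply: sub_all all_c => x /eqP ->.
by rewrite gcd_s dvdn1 => /eqP c_eq1; rewrite c_eq1 in c_gt1.
Qed.

Lemma entry_bound {n c : nat} {r : seq nat} {x : nat} :
  arith_structure_Kn n r -> head 0 r = c ->
  x \in r -> x != c -> pdiv c * x <= sumn r.
Proof.
move=> [_ pos_r srt_r _ dvd_r] head_r x_in x_ne_c.
have c_in : c \in r by rewrite -head_r (head_in x_in).
have x_gt0 : 0 < x by move/allP: pos_r; apply.
have x_le : x <= c.
  by move/allP: (sorted_geq_le_head srt_r) => /(_ x x_in); rewrite head_r.
apply: pdiv_mul_le.
- by rewrite sumn_gt0 // lt0n size_eq0; apply: contraTneq x_in => ->.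
1-2: by move/allP: dvd_r; apply.
by apply/negP => /(dvdn_leq x_gt0); rewrite leqNgt ltn_neqAle x_ne_c x_le.
Qed.

Lemma small_entries_bound {n c : nat} {r : seq nat} :
  1 < c -> arith_structure_Kn n r -> head 0 r = c ->
  exists2 t, 0 < t & pdiv c * t <= (n - count_mem c r) * (t + count_mem c r).
Proof.
move=> c_gt1 struct_r head_r; have [size_r pos_r _ gcd_r dvd_r] := struct_r.
set q := count_mem c r; set small := [seq x <- r | x != c].
have small_nonempty : 0 < size small.
  by rewrite lt0n size_eq0 -has_filter (gcd1_has_other c_gt1 gcd_r).
have c_in : c \in r.
  by case/hasP: (gcd1_has_other c_gt1 gcd_r) => y /head_in; rewrite head_r.
have /dvdnP [k sum_r] : c %| sumn r by move/allP: dvd_r; apply.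
have small_bound : all (fun x => pdiv c * x <= k * c) small.
  apply/allP => x; rewrite mem_filter -sum_r => /andP [x_ne_c x_in].
  exact: entry_bound struct_r head_r x_in x_ne_c.
have small_pos : all (fun x => 0 < x) small.
  by rewrite all_filter; apply: sub_all pos_r => x /= ->; rewrite implybT.
have size_small : size small = n - q.
  by rewrite /small size_filter -size_r -(count_predC (pred1 c) r) addKn.
have sum_small : sumn small = (k - q) * c.
  by rewrite mulnBl -sum_r (sumn_split c r) addKn.
have t_gt0 : 0 < k - q.
  by move: small_nonempty; rewrite -sumn_gt0 // sum_small muln_gt0 => /andP [].
exists (k - q) => //; rewrite subnK; last by rewrite ltnW // -subn_gt0.
rewrite -(leq_pmul2r (ltnW c_gt1)) -mulnA -sum_small -mulnA -size_small.
exact: sumn_bound.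
Qed.

(* Weighted AM-GM: 4 m (q + 1) <= (m + q + 1)^2, and t + q <= (q + 1) t. *)
Lemma amgm_weighted (m q t : nat) :
  0 < t -> 4 * m * (t + q) <= (m + q).+1 ^ 2 * t.
Proof.
move=> t_gt0.
have amgm : 4 * m * (q + 1) <= (m + q).+1 ^ 2.
  (* (m + q + 1)^2 - 4 m (q + 1) is the square of |m - (q + 1)|. *)
  have := leq0n ((m - q.+1) ^ 2 + (q.+1 - m) ^ 2).
  rewrite -!mulnn; nia.
have tq : t + q <= (q + 1) * t by nia.
apply: leq_trans (_ : 4 * m * (q + 1) * t <= _); last by rewrite leq_mul2r amgm orbT.
by rewrite -[4 * m * (q + 1) * t]mulnA leq_mul2l tq orbT.
Qed.

Theorem theorem3p1 (n c : nat) :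
  0 < n -> 2 <= c -> (n.+1) ^ 2 < 4 * pdiv c ->
  ~ (exists r : seq nat, arith_structure_Kn n r /\ head 0 r = c).
Proof.
move=> _ c_gt1 pdiv_big [r [struct_r head_r]].
have [t t_gt0] := small_entries_bound c_gt1 struct_r head_r.
have q_le_n : count_mem c r <= n by case: struct_r => <- *; apply: count_size.
set q := count_mem c r in q_le_n *; set m := n - q => key.
have amgm := amgm_weighted m q t t_gt0; rewrite subnK // in amgm.
have upper : 4 * pdiv c * t <= 4 * m * (t + q) by rewrite -!mulnA leq_mul2l key.
have lower : n.+1 ^ 2 * t < 4 * pdiv c * t by rewrite ltn_pmul2r.
by have := leq_trans upper amgm; rewrite leqNgt lower.
Qed.
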